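(* Let $R$ be a commutative unital ring and let $S \subseteq R$ be a proper unital subring such that the additive index $[R:S]$ is finite. Then there exists an ideal $I$ of $R$ with $I \subseteq S$ and $R/I$ finite (namely the conductor of $S$ in $R$, the largest ideal of $R$ contained in $S$); consequently $S/I$ is a subring of the finite ring $R/I$. Hence the proper finite-index subrings of $R$ correspond to the subrings of the finite quotient rings $R/I$, where $I$ ranges over the proper finite-index ideals of $R$. The analogous statement holds for a commutative algebra $R$ over a field $\mathbb{K}$ with ''finite index'' replaced by ''finite $\mathbb{K}$-codimension'' (for $\mathbb{K}$-subalgebras and ideals).
   Context: All rings are commutative and unital, subrings share the unit of the ambient ring. *)

From HB Require Import structures.
From mathcomp Require Import all_boot all_order all_algebra.
Set Implicit Arguments. Unset Strict Implicit. Unset Printing Implicit Defensive.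
Import Order.TTheory GRing.Theory Num.Theory.
Local Open Scope ring_scope.

Definition is_unital_subring (R : comNzRingType) (S : R -> Prop) : Prop :=
  [/\ S 1, (forall x y, S x -> S y -> S (x - y)) & (forall x y, S x -> S y -> S (x * y))].

Definition is_subalgebra (K : fieldType) (R : comAlgType K) (S : R -> Prop) : Prop :=
  [/\ S 1, (forall x y, S x -> S y -> S (x - y)), (forall x y, S x -> S y -> S (x * y))
    & (forall (c : K) x, S x -> S (c *: x))].

Definition is_ideal (R : comNzRingType) (I : R -> Prop) : Prop :=
  [/\ I 0, (forall x y, I x -> I y -> I (x - y)) & (forall r x, I x -> I (r * x))].

Definition finite_index (R : comNzRingType) (A : R -> Prop) : Prop :=
  exists reps : seq R, forall x : R, exists2 r, r \in reps & A (x - r).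

Definition finite_codim (K : fieldType) (R : comAlgType K) (A : R -> Prop) : Prop :=
  exists (n : nat) (v : 'I_n -> R), forall x : R,
    exists c : 'I_n -> K, A (x - \sum_(i < n) c i *: v i).

Definition conductor (R : comNzRingType) (S : R -> Prop) : R -> Prop :=
  fun x => forall r : R, S (r * x).

From HB Require Import structures.
From mathcomp Require Import all_boot all_order all_algebra.
From Stdlib Require Import Classical.
Set Implicit Arguments. Unset Strict Implicit.
Import Order.TTheory GRing.Theory Num.Theory.
Local Open Scope ring_scope.

(* Write R = S + {r_1, ..., r_n} (coset representatives, resp. a spanning
   family of R modulo S).  Then r x = s x + sum_i c_i (r_i x) shows that x lies
   in the conductor as soon as x and every r_i x lie in S.  So the conductor is
   a finite intersection of preimages of S under the additive (linear) maps
   x |-> t x, and finite index (codimension) passes to such preimages and to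
   finite intersections. *)

Definition subr_closed (V : zmodType) (A : V -> Prop) :=
  forall x y, A x -> A y -> A (x - y).

Definition fin_index (V : zmodType) (A : V -> Prop) :=
  exists reps : seq V, forall x, exists2 r, r \in reps & A (x - r).

Lemma seq_witnesses (T U : eqType) (P : T -> U -> Prop) (s : seq T) :
  exists xs : seq U,
    forall t, t \in s -> (exists x, P t x) -> exists2 x, x \in xs & P t x.
Proof.
elim: s => [|t s [xs IHs]]; first by exists [::].
have [[x Ptx]|noPt] := classic (exists x, P t x).
- exists (x :: xs) => t'; rewrite in_cons => /orP[/eqP-> _|t's Pt'].
    by exists x; rewrite ?mem_head.
  by have [x' xs_x' ?] := IHs t' t's Pt'; exists x'; rewrite // in_cons xs_x' orbT.
- by exists xs => t'; rewrite in_cons => /orP[/eqP->|]; [|exact: IHs].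
Qed.

Section FiniteIndex.
Variable V : zmodType.

Lemma fin_index_sub (A B : V -> Prop) :
  (forall x, A x -> B x) -> fin_index A -> fin_index B.
Proof. by move=> AB [reps Hreps]; exists reps => x; have [r ? /AB] := Hreps x; exists r. Qed.

Lemma fin_index_preim (W : zmodType) (f : V -> W) (A : W -> Prop) :
  zmod_morphism f -> subr_closed A -> fin_index A -> fin_index (fun x => A (f x)).
Proof.
move=> fB sA [reps Hreps].
have [xs Hxs] := seq_witnesses (fun r x => A (f x - r)) reps.
exists xs => x; have [r reps_r Afxr] := Hreps (f x).
have [x' xs_x' Afx'r] := Hxs r reps_r (ex_intro _ x Afxr).
by exists x' => //; rewrite fB; have := sA _ _ Afxr Afx'r; rewrite opprB addrA subrK.
Qed.

Lemma fin_index_prod (W : zmodType) (A : V -> Prop) (B : W -> Prop) :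
  fin_index A -> fin_index B -> fin_index (fun p : V * W => A p.1 /\ B p.2).
Proof.
move=> [ra Ha] [rb Hb]; exists [seq (a, b) | a <- ra, b <- rb] => -[x y].
have [a ra_a ?] := Ha x; have [b rb_b ?] := Hb y.
by exists (a, b); first exact: allpairs_f.
Qed.

Lemma fin_index_setI (A B : V -> Prop) : subr_closed A -> subr_closed B ->
  fin_index A -> fin_index B -> fin_index (fun x => A x /\ B x).
Proof.
move=> sA sB fA fB.
have sAB : subr_closed (fun p : V * V => A p.1 /\ B p.2).
  by move=> [x1 x2] [y1 y2] [? ?] [? ?]; split; [apply: sA|apply: sB].
exact: (@fin_index_preim _ (fun x => (x, x)) _ (fun _ _ => erefl) sAB
  (fin_index_prod fA fB)).
Qed.

Lemma fin_index_bigcap_preim (W : zmodType) (T : eqType) (F : T -> V -> W)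
    (B : W -> Prop) (s : seq T) :
  (forall t, zmod_morphism (F t)) -> subr_closed B -> fin_index B ->
  fin_index (fun x => forall t, t \in s -> B (F t x)).
Proof.
move=> FB sB fB; elim: s => [|t s IHs]; first by exists [:: 0] => x; exists 0; rewrite ?mem_head.
have sBs : subr_closed (fun x => forall t', t' \in s -> B (F t' x)).
  by move=> x y Bx By t' st'; rewrite FB; apply: sB; [apply: Bx|apply: By].
have sBt : subr_closed (fun x => B (F t x)) by move=> x y Bx By; rewrite FB; apply: sB.
apply: fin_index_sub (fin_index_setI sBt sBs (fin_index_preim (FB t) sB fB) IHs).
by move=> x [Btx Bsx] t'; rewrite in_cons => /orP[/eqP->|/Bsx].
Qed.

End FiniteIndex.

Definition is_subspace (K : fieldType) (V : lmodType K) (A : V -> Prop) :=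
  subr_closed A /\ forall (a : K) x, A x -> A (a *: x).

Definition fin_codim (K : fieldType) (V : lmodType K) (A : V -> Prop) :=
  exists n (v : 'I_n -> V), forall x, exists c : 'I_n -> K, A (x - \sum_(i < n) c i *: v i).

Section FiniteCodim.
Variables (K : fieldType) (V : lmodType K).

Lemma fin_codim_sub (A B : V -> Prop) :
  (forall x, A x -> B x) -> fin_codim A -> fin_codim B.
Proof. by move=> AB [n [v Hv]]; exists n, v => x; have [c /AB] := Hv x; exists c. Qed.

Lemma fin_codim_step (C D : V -> Prop) (x0 : V) :
  fin_codim D -> (forall x, D x -> exists k, C (x - k *: x0)) -> fin_codim C.
Proof.
move=> [n [v Hv]] DC.
exists n.+1, (fun i => if unlift ord0 i is Some j then v j else x0) => x.
have [c /DC[k Ck]] := Hv x.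
exists (fun i => if unlift ord0 i is Some j then c j else k).
rewrite big_ord_recl unlift_none; under eq_bigr => i _ do rewrite liftK.
by rewrite opprD addrA addrAC.
Qed.

Lemma fin_codim_setI_preim (W : lmodType K) (f : V -> W) (A : V -> Prop) (B : W -> Prop) :
  zmod_morphism f -> scalable f -> is_subspace A -> is_subspace B ->
  fin_codim A -> fin_codim B -> fin_codim (fun x => A x /\ B (f x)).
Proof.
move=> fB fZ [sA sAZ] sB fA [n [w Hw]].
elim: n w B sB Hw => [|n IHn] w B [sB sBZ] Hw.
  apply: fin_codim_sub fA => x Ax; split=> //.
  by have [c] := Hw (f x); rewrite big_ord0 subr0.
(* B' := B + K w_0 has a shorter spanning family.  Inside the preimage of B',
   the preimage of B has codimension at most one: it is spanned together with
   any x0 such that f x0 is in B + w_0, and it is everything if no such x0. *)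
pose B' y := exists k, B (y - k *: w ord0).
have sB' : is_subspace B'.
  split=> [y z [k Bk] [l Bl]|a y [k Bk]].
    by exists (k - l); move: (sB _ _ Bk Bl); rewrite opprD addrACA -opprD scalerBl.
  by exists (a * k); have := sBZ a _ Bk; rewrite scalerBr scalerA.
have Hw' y : exists c : 'I_n -> K, B' (y - \sum_(i < n) c i *: w (lift ord0 i)).
  have [c Bc] := Hw y; exists (fun i => c (lift ord0 i)), (c ord0).
  by move: Bc; rewrite big_ord_recl opprD addrA addrAC.
have IH := IHn _ B' sB' Hw'.
have [[x0 [Ax0 Bx0]]|noB] := classic (exists x0, A x0 /\ B (f x0 - w ord0)).
- apply: (fin_codim_step (x0 := x0) IH) => x [Ax [k Bk]]; exists k; split.
    exact: sA Ax (sAZ k _ Ax0).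
  by rewrite fB fZ; have := sB _ _ Bk (sBZ k _ Bx0); rewrite scalerBr opprB addrA subrK.
- apply: fin_codim_sub IH => x [Ax [k Bk]]; split=> //.
  have [k0|nz_k] := eqVneq k 0; first by move: Bk; rewrite k0 scale0r subr0.
  case: noB; exists (k^-1 *: x); split; first exact: sAZ.
  by rewrite fZ; have := sBZ k^-1 _ Bk; rewrite scalerBr scalerA mulVf // scale1r.
Qed.

Lemma fin_codim_bigcap_preim (W : lmodType K) (T : eqType)
    (F : T -> V -> W) (B : W -> Prop) (s : seq T) :
  (forall t, zmod_morphism (F t)) -> (forall t, scalable (F t)) ->
  is_subspace B -> fin_codim B ->
  fin_codim (fun x => forall t, t \in s -> B (F t x)).
Proof.
move=> FB FZ [sB sBZ] fB; elim: s => [|t s IHs].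
  by exists 0%N, (fun _ => 0) => x; exists (fun _ => 0).
have sBs : is_subspace (fun x => forall t', t' \in s -> B (F t' x)).
  split=> [x y Bx By|a x Bx] t' st'; first by rewrite FB; apply: sB; [apply: Bx|apply: By].
  by rewrite FZ; apply: sBZ; apply: Bx.
apply: fin_codim_sub (fin_codim_setI_preim (FB t) (FZ t) sBs (conj sB sBZ) IHs fB).
by move=> x [Bsx Btx] t'; rewrite in_cons => /orP[/eqP->|/Bsx].
Qed.

End FiniteCodim.

Section Conductor.
Variables (R : comNzRingType) (S : R -> Prop).
Hypothesis S_subring : is_unital_subring S.

Lemma subring_subr_closed : subr_closed S.
Proof. by case: S_subring. Qed.

Lemma subring0 : S 0.
Proof. by case: S_subring => S1 SB _; rewrite -(subrr 1); apply: SB. Qed.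

Lemma subringD x y : S x -> S y -> S (x + y).
Proof.
case: S_subring => _ SB _ Sx Sy; rewrite -[y]opprK -[- y]sub0r.
by apply: (SB) => //; apply: (SB) => //; apply: subring0.
Qed.

Lemma conductor_ideal : is_ideal (conductor S).
Proof.
case: S_subring => _ SB _; split=> [r|x y cx cy r|r x cx r'].
- by rewrite mulr0; apply: subring0.
- by rewrite mulrBr; apply: SB.
- by rewrite mulrA.
Qed.

Lemma conductor_sub x : conductor S x -> S x.
Proof. by move/(_ 1); rewrite mul1r. Qed.

Lemma ideal_sub_conductor (J : R -> Prop) :
  is_ideal J -> (forall x, J x -> S x) -> forall x, J x -> conductor S x.
Proof. by case=> _ _ JM JS x Jx r; apply/JS/JM. Qed.

Lemma conductor_cosets (reps : seq R) :
  (forall r, exists2 r0, r0 \in reps & S (r - r0)) ->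
  forall x, (forall t, t \in 1 :: reps -> S (t * x)) -> conductor S x.
Proof.
case: S_subring => _ _ SM Hreps x Stx r; have [r0 reps_r0 Srr0] := Hreps r.
have Sx := Stx 1 (mem_head 1 reps); rewrite mul1r in Sx.
rewrite -[r](subrK r0) mulrDl; apply: subringD; first exact: SM.
by apply: Stx; rewrite in_cons reps_r0 orbT.
Qed.

Lemma fin_index_conductor : fin_index S -> fin_index (conductor S).
Proof.
move=> fS; have [reps Hreps] := fS.
apply: fin_index_sub (conductor_cosets Hreps) _.
exact: fin_index_bigcap_preim (fun t x y => mulrBr t x y) subring_subr_closed fS.
Qed.

End Conductor.

Section AlgebraConductor.
Variables (K : fieldType) (R : comAlgType K) (S : R -> Prop).
Hypothesis S_subalg : is_subalgebra S.

Lemma subalgebra_subring : is_unital_subring S.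
Proof. by case: S_subalg. Qed.

Lemma subalgebra_subspace : is_subspace S.
Proof. by case: S_subalg. Qed.

Lemma conductor_span n (v : 'I_n -> R) :
  (forall r, exists c : 'I_n -> K, S (r - \sum_(i < n) c i *: v i)) ->
  forall x, (forall t, t \in 1 :: codom v -> S (t * x)) -> conductor S x.
Proof.
have S_ring := subalgebra_subring.
case: S_subalg => _ _ SM SZ Hv x Stx r; have [c Src] := Hv r.
have Sx := Stx 1 (mem_head 1 (codom v)); rewrite mul1r in Sx.
rewrite -[r](subrK (\sum_(i < n) c i *: v i)) mulrDl.
apply: (subringD S_ring) (SM _ _ Src Sx) _.
rewrite mulr_suml; apply: (big_ind S (subring0 S_ring) (subringD S_ring)) => i _.
by rewrite -scalerAl; apply/SZ/Stx; rewrite in_cons codom_f orbT.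
Qed.

Lemma fin_codim_conductor : fin_codim S -> fin_codim (conductor S).
Proof.
move=> fS; have [n [v Hv]] := fS.
apply: fin_codim_sub (conductor_span Hv) _.
exact: (@fin_codim_bigcap_preim _ _ _ _ (fun t x : R => t * x))
  (fun t x y => mulrBr t x y) (fun t a x => esym (scalerAr a t x)) subalgebra_subspace fS.
Qed.

End AlgebraConductor.

Theorem mainTheorem1 :
  (forall (R : comNzRingType) (S : R -> Prop),
      is_unital_subring S -> (exists x : R, ~ S x) -> finite_index S ->
      exists I : R -> Prop,
        [/\ is_ideal I, (forall x, I x -> S x), finite_index I,
            (forall x, I x <-> conductor S x)
          & (forall J : R -> Prop, is_ideal J -> (forall x, J x -> S x) ->
               forall x, J x -> I x)])
  /\
  (forall (K : fieldType) (R : comAlgType K) (S : R -> Prop),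
      is_subalgebra S -> (exists x : R, ~ S x) -> finite_codim S ->
      exists I : R -> Prop,
        [/\ is_ideal I, (forall x, I x -> S x), finite_codim I,
            (forall x, I x <-> conductor S x)
          & (forall J : R -> Prop, is_ideal J -> (forall x, J x -> S x) ->
               forall x, J x -> I x)]).
Proof.
split=> [R S S_subring _ fS | K R S S_subalg _ fS]; exists (conductor S).
  split=> //; [exact: conductor_ideal | exact: conductor_sub |
               exact: fin_index_conductor | exact: ideal_sub_conductor].
have S_subring := subalgebra_subring S_subalg.
split=> //; [exact: conductor_ideal | exact: conductor_sub |
             exact: fin_codim_conductor | exact: ideal_sub_conductor].
Qed.
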